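(* For every backward trie $\mathsf{T}_b$ with $n$ nodes, $\mathsf{CDAWG}(\mathsf{T}_b)$ has at most $2n-3$ nodes and at most $2n-4$ edges, independently of the alphabet size.
   Context: An alphabet $\Sigma$ is a finite ordered set of characters. A forward trie $\mathsf{T}_f$ is a rooted tree with $n$ nodes in which every edge is directed from parent to child and labeled by a single character of $\Sigma$, such that the edges leaving any node carry pairwise distinct labels. The backward trie $\mathsf{T}_b$ is obtained from $\mathsf{T}_f$ by reversing the direction of every edge while keeping its label; it has the same nodes and root $r$. For nodes $u,v$ with $u$ an ancestor of $v$ (possibly $u=v$), $\mathrm{str}_b(v,u)$ is the string of labels read along the reversed (upward) path from $v$ to $u$. Define $\mathrm{Substr}(\mathsf{T}_b)=\{\mathrm{str}_b(v,u): u \text{ an ancestor of } v\}$. A string $Y\in\mathrm{Substr}(\mathsf{T}_b)$ is left-maximal on $\mathsf{T}_b$ if either there are distinct characters $a\ne b$ with $aY,bY\in\mathrm{Substr}(\mathsf{T}_b)$, or $Y=\mathrm{str}_b(\ell,u)$ for some leaf $\ell$; it is right-maximal on $\mathsf{T}_b$ if either there are distinct $a\ne b$ with $Ya,Yb\in\mathrm{Substr}(\mathsf{T}_b)$, or $Y=\mathrm{str}_b(v,r)$ for some node $v$; it is maximal if it is both. For $Y\in\mathrm{Substr}(\mathsf{T}_b)$ let $\mathrm{mx}_b(Y)$ be the shortest maximal string on $\mathsf{T}_b$ of the form $\gamma Y\delta$ with $\gamma,\delta\in\Sigma^*$. Two substrings $Y,Y'$ are equivalent iff $\mathrm{mx}_b(Y)=\mathrm{mx}_b(Y')$.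 $\mathsf{CDAWG}(\mathsf{T}_b)$ is the edge-labeled DAG whose nodes are these equivalence classes; for each class $C$ with representative $M=\mathrm{mx}_b(Y)$ ($Y\in C$) and each character $a$ with $Ma\in\mathrm{Substr}(\mathsf{T}_b)$ there is exactly one edge leaving $C$ whose label begins with $a$ (it leads to the class of $Ma$ and is labeled $a\beta$, where $Ma\beta$ is the shortest right-maximal string on $\mathsf{T}_b$ having $Ma$ as a prefix), and there are no other edges. *)

From mathcomp Require Import all_boot.
Set Implicit Arguments. Unset Strict Implicit. Unset Printing Implicit Defensive.

(* A forward trie with n nodes is encoded by its node set 'I_n, a root r,
   a parent map par (par r = r) and, for every non-root node v, the label
   lab v of the edge par v -> v.  lab r is irrelevant. *)
Definition is_trie (Sigma : finType) (n : nat) (par : 'I_n -> 'I_n)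
    (lab : 'I_n -> Sigma) (r : 'I_n) : Prop :=
  [/\ par r = r,
      (forall v, exists k, iter k par v = r) &
      (forall u v, u != r -> v != r -> par u = par v -> lab u = lab v -> u = v)].

Section BackwardTrie.
Variables (Sigma : finType) (n : nat) (par : 'I_n -> 'I_n)
          (lab : 'I_n -> Sigma) (r : 'I_n).

Definition upath (v : 'I_n) (k : nat) : Prop :=
  forall i, i < k -> iter i par v != r.

(* str_b(v, u) where u = iter k par v *)
Definition strb (v : 'I_n) (k : nat) : seq Sigma :=
  [seq lab (iter i par v) | i <- iota 0 k].

Definition substr (Y : seq Sigma) : Prop :=
  exists v k, upath v k /\ Y = strb v k.

Definition is_leaf (l : 'I_n) : Prop := forall w, w != r -> par w != l.

Definition left_maximal (Y : seq Sigma) : Prop :=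
  substr Y /\
  ((exists a b : Sigma, a != b /\ substr (a :: Y) /\ substr (b :: Y)) \/
   (exists l k, is_leaf l /\ upath l k /\ Y = strb l k)).

Definition right_maximal (Y : seq Sigma) : Prop :=
  substr Y /\
  ((exists a b : Sigma, a != b /\ substr (rcons Y a) /\ substr (rcons Y b)) \/
   (exists v k, upath v k /\ iter k par v = r /\ Y = strb v k)).

Definition maximal (Y : seq Sigma) : Prop := left_maximal Y /\ right_maximal Y.

Definition is_mx (M Y : seq Sigma) : Prop :=
  [/\ maximal M, infix Y M &
      forall M', maximal M' -> infix Y M' -> size M <= size M'].

(* nodes of CDAWG(T_b), each class represented by its string mx_b(Y) *)
Definition cdawg_node (M : seq Sigma) : Prop :=
  exists Y, substr Y /\ is_mx M Y.

Definition shortest_rmax_ext (P Q : seq Sigma) : Prop :=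
  [/\ right_maximal Q, prefix P Q &
      forall Q', right_maximal Q' -> prefix P Q' -> size Q <= size Q'].

(* edges of CDAWG(T_b): (source node M, label a beta, target node mx_b(Ma)) *)
Definition cdawg_edge (e : seq Sigma * seq Sigma * seq Sigma) : Prop :=
  let: (M, lbl, M') := e in
  exists (a : Sigma) (beta : seq Sigma),
    [/\ lbl = a :: beta, cdawg_node M, substr (rcons M a),
        shortest_rmax_ext (rcons M a) (rcons M a ++ beta) &
        is_mx M' (rcons M a)].

End BackwardTrie.

From Pilot Require Import Defs.
From mathcomp Require Import all_boot.
From Stdlib Require Import Classical ClassicalEpsilon.
From mathcomp Require Import zify.
Set Implicit Arguments. Unset Strict Implicit. Unset Printing Implicit Defensive.

(* Every node of CDAWG(T_b) is a maximal, hence right-maximal, substring,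
   and every edge (M, a beta, M') is determined by its word M a beta, which
   is right-maximal and nonempty: M is its longest right-maximal proper
   prefix (by minimality of the label), and M' = mx_b(M a) is determined
   because the shortest maximal superstring of a substring is unique.
   A right-maximal substring is either a root string str_b(v, r) or a word
   branching in the compacted trie of the n root strings.  Inserting the
   root strings one at a time, each adds at most two nodes to that trie;
   starting from the root and two nodes with distinct labels (3 nodes) this
   gives at most 2n - 3 right-maximal strings, and if all labels coincide
   nothing branches and there are at most n <= 2n - 3.  Dropping the empty
   string leaves 2n - 4 possible edge words. *)

Lemma infix_size_eq (T : eqType) (s t : seq T) :
  infix s t -> size t <= size s -> s = t.
Proof.
move=> /infixP[x [z ->]]; rewrite !size_cat => Hs.
have /nilP -> : nilp x by rewrite /nilp; lia.
have /nilP -> : nilp z by rewrite /nilp; lia.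
by rewrite cats0.
Qed.

Lemma prefix_shorter (T : eqType) (p q w : seq T) :
  prefix p w -> prefix q w -> size p <= size q -> prefix p q.
Proof.
rewrite !prefixE => /eqP Hp /eqP Hq Hs.
by rewrite -Hq take_takel // Hp.
Qed.

Lemma prefix_same_size (T : eqType) (p q w : seq T) :
  prefix p w -> prefix q w -> size p = size q -> p = q.
Proof.
move=> Hp Hq Hs; have := prefix_shorter Hp Hq; rewrite Hs leqnn => /(_ isT).
by rewrite prefixE Hs take_size => /eqP.
Qed.

Lemma prefix_rcons_eq (T : eqType) (Y : seq T) a b w :
  prefix (rcons Y a) w -> prefix (rcons Y b) w -> a = b.
Proof.
move=> Ha Hb; have := prefix_same_size Ha Hb; rewrite !size_rcons => /(_ erefl) E.
by have := congr1 (last a) E; rewrite !last_rcons.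
Qed.

Section TrieStrings.
Variables (Sigma : finType) (n : nat) (par : 'I_n -> 'I_n)
          (lab : 'I_n -> Sigma) (r : 'I_n).

Local Notation strb := (strb par lab).
Local Notation upath := (upath par r).
Local Notation substr := (substr par lab r).
Local Notation left_maximal := (left_maximal par lab r).
Local Notation right_maximal := (right_maximal par lab r).
Local Notation maximal := (maximal par lab r).
Local Notation is_mx := (is_mx par lab r).

Lemma size_strb v k : size (strb v k) = k.
Proof. by rewrite /Defs.strb size_map size_iota. Qed.

Lemma strbD v i j : strb v (i + j) = strb v i ++ strb (iter i par v) j.
Proof.
rewrite /Defs.strb iotaD map_cat add0n; congr (_ ++ _).
rewrite -{1}(addn0 i) iotaDl -map_comp; apply: eq_map => k /=.
by rewrite addnC iterD.
Qed.

Lemma upath_iter v i j : upath v (i + j) -> upath (iter i par v) j.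
Proof. by move=> H k Hk; rewrite -iterD; apply: H; rewrite addnC ltn_add2l. Qed.

Lemma upath_le v k j : upath v k -> j <= k -> upath v j.
Proof. by move=> H Hj i Hi; apply: H; apply: leq_trans Hj. Qed.

Lemma strb_factor v k x y z : x ++ y ++ z = strb v k ->
  y = strb (iter (size x) par v) (size y) /\ k = size x + size y + size z.
Proof.
move=> H.
have Hk : k = size x + size y + size z.
  by rewrite -(size_strb v k) -H !size_cat addnA.
split=> //; move: H; rewrite Hk -addnA strbD strbD => H.
have := congr1 (take (size y)) (congr1 (drop (size x)) H).
by rewrite !drop_size_cat ?size_strb // !take_size_cat ?size_strb.
Qed.

Lemma substr_factor x y z : substr (x ++ y ++ z) -> substr y.
Proof.
case=> v [k [Hu Hs]]; have [Hy Hk] := strb_factor Hs.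
exists (iter (size x) par v), (size y); split=> //.
apply: (@upath_le _ (size y + size z)); last exact: leq_addr.
by apply: upath_iter; rewrite addnA -Hk.
Qed.

Lemma substr_infix Y M : infix Y M -> substr M -> substr Y.
Proof. by move=> /infixP[x [z ->]]; apply: substr_factor. Qed.

Lemma maximal_substr M : maximal M -> substr M.
Proof. by case=> -[]. Qed.

Lemma left_maximal_prefix Y d : left_maximal (Y ++ d) -> left_maximal Y.
Proof.
have sub W : substr (W ++ d) -> substr W by move/(@substr_factor [::]).
case=> HS [[a [b [Hab [Ha Hb]]]]|[l [k [Hl [Hu Hs]]]]]; split; auto.
- by left; exists a, b; split; [|split; apply: sub].
- right; have [HY Hk] := @strb_factor l k [::] Y d Hs.
  exists l, (size Y); split=> //; split=> //.
  by apply: upath_le Hu _; rewrite Hk leq_addr.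
Qed.

Lemma right_maximal_suffix g Y : right_maximal (g ++ Y) -> right_maximal Y.
Proof.
have sub W : substr (g ++ W) -> substr W.
  by move=> HW; apply: (@substr_factor g _ [::]); rewrite cats0.
case=> HS [[a [b [Hab [Ha Hb]]]]|[v [k [Hu [Hr Hs]]]]]; split; auto.
- by left; exists a, b; split; [|split; apply: sub; rewrite -rcons_cat].
- right; have [HY Hk] := @strb_factor v k g Y [::] (etrans (congr1 (cat g) (cats0 Y)) Hs).
  rewrite addn0 in Hk.
  exists (iter (size g) par v), (size Y); split; last split=> //.
  + by apply: upath_iter; rewrite -Hk.
  + by rewrite -iterD addnC -Hk.
Qed.

Lemma left_extension M Y : maximal M -> infix Y M -> ~ left_maximal Y ->
  exists c, infix (c :: Y) M /\ substr (c :: Y).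
Proof.
move=> HM /infixP[g [d HMe]] HnL; case/lastP: g HMe => [|g c] HMe.
  by case: HnL; apply: (@left_maximal_prefix _ d); rewrite /= in HMe; rewrite -HMe; case: HM.
rewrite cat_rcons in HMe; exists c; split; first by apply/infixP; exists g, d.
by apply: (@substr_factor g _ d); rewrite -HMe; apply: maximal_substr.
Qed.

Lemma right_extension M Y : maximal M -> infix Y M -> ~ right_maximal Y ->
  exists c, infix (rcons Y c) M /\ substr (rcons Y c).
Proof.
move=> HM /infixP[g [d HMe]] HnR; case: d HMe => [|c d] HMe.
  by case: HnR; apply: (@right_maximal_suffix g); rewrite cats0 in HMe; rewrite -HMe; case: HM.
rewrite -cat_rcons in HMe; exists c; split; first by apply/infixP; exists g, d.
by apply: (@substr_factor g _ d); rewrite -HMe; apply: maximal_substr.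
Qed.

Lemma left_letter_unique Y a b : ~ left_maximal Y -> substr Y ->
  substr (a :: Y) -> substr (b :: Y) -> a = b.
Proof.
move=> HnL HY Ha Hb; apply: NNPP => Hab; apply: HnL; split=> //.
by left; exists a, b; split=> //; apply/eqP.
Qed.

Lemma right_letter_unique Y a b : ~ right_maximal Y -> substr Y ->
  substr (rcons Y a) -> substr (rcons Y b) -> a = b.
Proof.
move=> HnR HY Ha Hb; apply: NNPP => Hab; apply: HnR; split=> //.
by left; exists a, b; split=> //; apply/eqP.
Qed.

Lemma is_mx_infix M Y Y' : is_mx M Y -> infix Y' M -> infix Y Y' -> is_mx M Y'.
Proof.
case=> HM HI Hmin HI' HYY'; split=> // M' HM' HI2.
by apply: Hmin => //; apply: infix_trans HYY' HI2.
Qed.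

Lemma is_mx_maximal M Y : maximal Y -> is_mx M Y -> M = Y.
Proof. by move=> HY [_ HI Hmin]; rewrite (infix_size_eq HI (Hmin _ HY (infix_refl Y))). Qed.

(* A non-maximal Y inside two candidates M1, M2 for mx_b(Y) grows by one
   letter that is forced, hence common to both candidates. *)
Lemma is_mx_grow M1 M2 Y : is_mx M1 Y -> is_mx M2 Y -> ~ maximal Y ->
  exists Y', [/\ is_mx M1 Y', is_mx M2 Y' & size Y < size Y'].
Proof.
move=> H1 H2 HnY; have [X1 I1 _] := H1; have [X2 I2 _] := H2.
have SY : substr Y by apply: substr_infix I1 _; apply: maximal_substr.
have [HnL|HnR] := not_and_or _ _ HnY.
- have [c [Ic Sc]] := left_extension X1 I1 HnL.
  have [c' [Ic' Sc']] := left_extension X2 I2 HnL.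
  rewrite -(left_letter_unique HnL SY Sc Sc') in Ic'.
  exists (c :: Y); split=> //.
  + exact: is_mx_infix H1 Ic (infix_cons _ _).
  + exact: is_mx_infix H2 Ic' (infix_cons _ _).
- have [c [Ic Sc]] := right_extension X1 I1 HnR.
  have [c' [Ic' Sc']] := right_extension X2 I2 HnR.
  rewrite -(right_letter_unique HnR SY Sc Sc') in Ic'.
  exists (rcons Y c); split; last by rewrite size_rcons.
  + exact: is_mx_infix H1 Ic (infix_rcons _ _).
  + exact: is_mx_infix H2 Ic' (infix_rcons _ _).
Qed.

Lemma is_mx_unique Y M1 M2 : is_mx M1 Y -> is_mx M2 Y -> M1 = M2.
Proof.
suff grow d : forall Y, size M1 <= d + size Y -> is_mx M1 Y -> is_mx M2 Y -> M1 = M2.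
  by apply: (grow (size M1)); rewrite leq_addr.
elim: d => [|d IH] {}Y Hs H1 H2.
  have [HY|HnY] := classic (maximal Y).
    by rewrite (is_mx_maximal HY H1) (is_mx_maximal HY H2).
  have [Y' [[_ I1 _] _ HY']] := is_mx_grow H1 H2 HnY.
  by have := leq_trans (size_infix I1) Hs; rewrite leqNgt HY'.
have [HY|HnY] := classic (maximal Y).
  by rewrite (is_mx_maximal HY H1) (is_mx_maximal HY H2).
have [Y' [H1' H2' HY']] := is_mx_grow H1 H2 HnY.
by apply: (IH Y') => //; lia.
Qed.

End TrieStrings.

(* Nodes of the compacted trie of a finite set of words L: the words of L
   and the branching words, i.e. words continued by two distinct letters
   as prefixes of words of L. *)
Section CompactedTrie.
Variable T : eqType.

Definition ctrie_node (L : seq (seq T)) (Y : seq T) : Prop :=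
  Y \in L \/
  exists a b : T, a != b /\ (exists2 w, w \in L & prefix (rcons Y a) w)
                         /\ (exists2 w, w \in L & prefix (rcons Y b) w).

Lemma ctrie_node_sub L L' Y : {subset L <= L'} -> ctrie_node L Y -> ctrie_node L' Y.
Proof.
move=> HL [HY|[a [b [Hab [[w1 H1 P1] [w2 H2 P2]]]]]]; first by left; apply: HL.
by right; exists a, b; split=> //; split; [exists w1 | exists w2]; rewrite ?HL.
Qed.

Definition branch_node (L : seq (seq T)) (x Y : seq T) : Prop :=
  [/\ ctrie_node (x :: L) Y, ~ ctrie_node L Y & Y <> x].

Lemma branch_nodeP L x Y : branch_node L x Y -> exists c,
  [/\ prefix (rcons Y c) x, (exists2 w, w \in L & prefix Y w) &
      forall w, w \in L -> ~~ prefix (rcons Y c) w].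
Proof.
case=> [[HY|[a [b [Hab [[w1 Hw1 P1] [w2 Hw2 P2]]]]]] HnL Hnx].
  by move: HY; rewrite in_cons => /orP[/eqP //|HY]; case: HnL; left.
have fresh c d w' : c != d -> w' \in L -> prefix (rcons Y d) w' ->
    forall w, w \in L -> ~~ prefix (rcons Y c) w.
  move=> Hcd Hw' Pd w Hw; apply/negP => Pc; apply: HnL; right.
  by exists c, d; split=> //; split; [exists w | exists w'].
move: Hw1 Hw2; rewrite !in_cons => /orP[/eqP E1|Hw1] /orP[/eqP E2|Hw2].
- by subst; move: Hab; rewrite (prefix_rcons_eq P1 P2) eqxx.
- subst w1; exists a; split=> //.
    by exists w2 => //; apply: prefix_trans P2; apply: prefix_rcons.
  exact: fresh Hab Hw2 P2.
- subst w2; exists b; split=> //.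
    by exists w1 => //; apply: prefix_trans P1; apply: prefix_rcons.
  by apply: fresh Hw1 P1; rewrite eq_sym.
- by case: HnL; right; exists a, b; split=> //; split; [exists w1 | exists w2].
Qed.

Lemma branch_node_unique L x Y1 Y2 :
  branch_node L x Y1 -> branch_node L x Y2 -> Y1 = Y2.
Proof.
have shorter Z1 Z2 : branch_node L x Z1 -> branch_node L x Z2 -> ~ size Z1 < size Z2.
  move=> /branch_nodeP[c1 [P1 _ N1]] /branch_nodeP[c2 [P2 [w2 Hw2 Q2]] _] Hs.
  have PZ2 : prefix Z2 x by apply: prefix_trans P2; apply: prefix_rcons.
  have P : prefix (rcons Z1 c1) Z2 by apply: prefix_shorter P1 PZ2 _; rewrite size_rcons.
  by move: (N1 _ Hw2); rewrite (prefix_trans P Q2).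
move=> H1 H2; case: (ltngtP (size Y1) (size Y2)) => Hs.
- by case: (shorter _ _ H1 H2 Hs).
- by case: (shorter _ _ H2 H1 Hs).
- have /branch_nodeP[c1 [P1 _ _]] := H1; have /branch_nodeP[c2 [P2 _ _]] := H2.
  by apply: prefix_same_size Hs; [exact: prefix_trans (prefix_rcons _ c1) P1
                                 | exact: prefix_trans (prefix_rcons _ c2) P2].
Qed.

Lemma ctrie_node_insert L x : exists y, forall Y,
  ctrie_node (x :: L) Y -> [\/ ctrie_node L Y, Y = x | Y = y].
Proof.
have [[y Hy]|Hnone] := classic (exists Y, branch_node L x Y).
- exists y => Y HY; have [HL|HnL] := classic (ctrie_node L Y); first exact: Or31.
  have [->|Hnx] := classic (Y = x); first exact: Or32.
  by apply: Or33; apply: branch_node_unique Hy; split.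
- exists x => Y HY; have [HL|HnL] := classic (ctrie_node L Y); first exact: Or31.
  have [->|Hnx] := classic (Y = x); first exact: Or32.
  by case: Hnone; exists Y; split.
Qed.

Lemma ctrie_node_cover L0 (C0 : seq (seq T)) rest :
  (forall Y, ctrie_node L0 Y -> Y \in C0) ->
  exists C, size C <= size C0 + 2 * size rest /\
            forall Y, ctrie_node (rest ++ L0) Y -> Y \in C.
Proof.
move=> H0; elim: rest => [|x rest [C [HC HCY]]]; first by exists C0; rewrite addn0.
have [y Hy] := ctrie_node_insert (rest ++ L0) x.
exists [:: x, y & C]; split; first by rewrite /= mulnS addnCA -add2n leq_add2l.
move=> Y /Hy[/HCY HY|->|->]; by rewrite !in_cons ?HY ?eqxx ?orbT.
Qed.

Lemma ctrie_node_three (a b : T) t1 t2 Y : a != b ->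
  ctrie_node [:: [::]; a :: t1; b :: t2] Y -> Y \in [:: [::]; a :: t1; b :: t2].
Proof.
move=> Hab [//|[a' [b' [Hab' [[w1 Hw1 P1] [w2 Hw2 P2]]]]]].
case: Y P1 P2 => [|c Y] P1 P2; first by rewrite in_cons eqxx.
have first_letter w d : w \in [:: [::]; a :: t1; b :: t2] ->
    prefix (rcons (c :: Y) d) w -> (w = a :: t1 /\ c = a) \/ (w = b :: t2 /\ c = b).
  by rewrite !in_cons orbF => /or3P[] /eqP -> //= /andP[/eqP -> _]; [left | right].
have [[E1 C1]|[E1 C1]] := first_letter _ _ Hw1 P1;
  have [[E2 C2]|[E2 C2]] := first_letter _ _ Hw2 P2; subst;
  by move: Hab Hab'; rewrite ?(prefix_rcons_eq P1 P2) eqxx ?andbF.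
Qed.

Lemma ctrie_node_unary L (a : T) Y :
  (forall w, w \in L -> all (pred1 a) w) -> ctrie_node L Y -> Y \in L.
Proof.
move=> Ha [//|[a' [b' [Hab' [[w1 Hw1 P1] [w2 Hw2 P2]]]]]].
have last_in c w : prefix (rcons Y c) w -> c \in w.
  by move/prefixW/mem_infix; apply; rewrite mem_rcons mem_head.
move: (allP (Ha _ Hw1) _ (last_in _ _ P1)) (allP (Ha _ Hw2) _ (last_in _ _ P2)).
by move=> /eqP E1 /eqP E2; move: Hab'; rewrite E1 E2 eqxx.
Qed.

End CompactedTrie.

Lemma list_by_injection (A : eqType) (B : eqType) (P : A -> Prop) (f : A -> B)
    (C : seq B) (a0 : A) :
  (forall x y, P x -> P y -> f x = f y -> x = y) -> (forall x, P x -> f x \in C) ->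
  exists s, size s <= size C /\ forall x, P x -> x \in s.
Proof.
move=> Hinj HC; pose pick b := epsilon (inhabits a0) (fun x => P x /\ f x = b).
exists [seq pick b | b <- C]; split=> [|x Px]; first by rewrite size_map.
have [Ppick Epick] : P (pick (f x)) /\ f (pick (f x)) = f x.
  by apply: (epsilon_spec (inhabits a0) (fun y => P y /\ f y = f x)); exists x.
by rewrite (Hinj _ _ Px Ppick (esym Epick)); apply: map_f; apply: HC.
Qed.

Section RootStrings.
Variables (Sigma : finType) (n : nat) (par : 'I_n -> 'I_n)
          (lab : 'I_n -> Sigma) (r : 'I_n).
Hypothesis reach_root : forall v, exists k, iter k par v = r.

Local Notation strb := (strb par lab).
Local Notation upath := (upath par r).
Local Notation substr := (substr par lab r).
Local Notation right_maximal := (right_maximal par lab r).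

Lemma reach_root_b v : exists k, iter k par v == r.
Proof. by have [k Hk] := reach_root v; exists k; apply/eqP. Qed.

Definition depth v : nat := ex_minn (reach_root_b v).

Lemma depthP v :
  iter (depth v) par v = r /\ forall k, iter k par v = r -> depth v <= k.
Proof.
rewrite /depth; case: ex_minnP => m /eqP Hm Hmin; split=> // k Hk.
by apply: Hmin; apply/eqP.
Qed.

Definition rootstr v : seq Sigma := strb v (depth v).

Definition rootstrs : seq (seq Sigma) := [seq rootstr v | v <- enum 'I_n].

Lemma rootstr_in v : rootstr v \in rootstrs.
Proof. by apply: map_f; rewrite mem_enum. Qed.

Lemma upath_depth v k : upath v k -> k <= depth v.
Proof.
move=> Hu; rewrite leqNgt; apply/negP => Hlt.
by move: (Hu _ Hlt); rewrite (depthP v).1 eqxx.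
Qed.

Lemma depth_upath v : upath v (depth v).
Proof.
move=> i Hi; apply/negP => /eqP Hr.
by have := (depthP v).2 _ Hr; rewrite leqNgt Hi.
Qed.

Lemma rootstr_root : rootstr r = [::].
Proof. by have := (depthP r).2 0 erefl; rewrite leqn0 /rootstr => /eqP ->. Qed.

Lemma rootstr_nonroot v : v != r -> exists t, rootstr v = lab v :: t.
Proof.
move=> Hv; have Hd : 0 < depth v.
  rewrite lt0n; apply: contra Hv => /eqP H0.
  by have := (depthP v).1; rewrite H0 /= => ->.
exists (strb (iter 1 par v) (depth v - 1)).
by rewrite /rootstr -(subnKC Hd) strbD subnKC // -addn1 addKn.
Qed.

Lemma rootstr_labels v x : x \in rootstr v -> exists2 w, w != r & x = lab w.
Proof.
rewrite /rootstr /Defs.strb => /mapP[i]; rewrite mem_iota add0n => /andP[_ Hi] ->.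
by exists (iter i par v) => //; apply: depth_upath.
Qed.

Lemma substr_prefix_rootstr Y : substr Y -> exists v, prefix Y (rootstr v).
Proof.
case=> v [k [Hu ->]]; exists v.
by rewrite /rootstr -(subnKC (upath_depth Hu)) strbD prefix_prefix.
Qed.

Lemma strb_to_root v k : upath v k -> iter k par v = r -> strb v k = rootstr v.
Proof.
move=> Hu Hr; rewrite /rootstr; congr strb.
by apply/eqP; rewrite eqn_leq upath_depth //= (depthP v).2.
Qed.

Lemma right_maximal_ctrie Y : right_maximal Y -> ctrie_node rootstrs Y.
Proof.
move=> [HS [[a [b [Hab [Ha Hb]]]]|[v [k [Hu [Hr ->]]]]]].
- have [va Pa] := substr_prefix_rootstr Ha; have [vb Pb] := substr_prefix_rootstr Hb.
  right; exists a, b; split=> //.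
  by split; [exists (rootstr va) | exists (rootstr vb)]; rewrite ?rootstr_in.
- by left; rewrite (strb_to_root Hu Hr) rootstr_in.
Qed.

(* Two non-root nodes with distinct labels: start from the three-node
   trie on r, v1, v2 and insert the n - 3 remaining root strings. *)
Lemma ctrie_bound_branching v1 v2 : v1 != r -> v2 != r -> lab v1 != lab v2 ->
  exists C, size C <= 2 * n - 3 /\ forall Y, ctrie_node rootstrs Y -> Y \in C.
Proof.
move=> H1 H2 H12; have [t1 E1] := rootstr_nonroot H1; have [t2 E2] := rootstr_nonroot H2.
pose base := [:: r; v1; v2]; pose L0 := [seq rootstr v | v <- base].
pose rest := [seq rootstr v | v <- enum [predC base]].
have base_nodes Y : ctrie_node L0 Y -> Y \in L0.
  by rewrite /L0 /= rootstr_root E1 E2; apply: ctrie_node_three H12.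
have [C [HC HCY]] := ctrie_node_cover rest base_nodes.
have uniq_base : uniq base.
  rewrite /= !inE negb_or eq_sym H1 eq_sym H2 /= !andbT.
  by apply: contra H12 => /eqP ->.
have size_rest : size rest + 3 = n.
  rewrite size_map -cardE addnC; have := cardC (mem base).
  by rewrite card_ord (card_uniqP uniq_base).
exists C; split; first by move: HC size_rest => /=; lia.
move=> Y /(ctrie_node_sub _) HY; apply: HCY; apply: HY => _ /mapP[v _ ->].
rewrite mem_cat; have [Hv|Hv] := boolP (v \in base).
  by rewrite (map_f rootstr Hv) orbT.
by rewrite map_f // mem_enum inE.
Qed.

(* All labels equal: no substring branches, so the nodes are the n root
   strings. *)
Lemma ctrie_bound_unary : 3 <= n ->
  ~ (exists v1 v2, [/\ v1 != r, v2 != r & lab v1 != lab v2]) ->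
  exists C, size C <= 2 * n - 3 /\ forall Y, ctrie_node rootstrs Y -> Y \in C.
Proof.
move=> Hn Hno; have [w0 Hw0] : exists w0, w0 != r.
  have [lt0 lt1] : 0 < n /\ 1 < n by split; apply: leq_trans Hn.
  case E: (Ordinal lt0 == r); last by exists (Ordinal lt0); rewrite E.
  by exists (Ordinal lt1); move/eqP: E => <-.
have Hall w : w != r -> lab w = lab w0.
  by move=> Hw; apply: NNPP => Hne; apply: Hno; exists w, w0; split=> //; apply/eqP.
exists rootstrs; split; first by rewrite size_map size_enum_ord; lia.
move=> Y; apply: (ctrie_node_unary (a := lab w0)) => _ /mapP[v _ ->].
by apply/allP => x /rootstr_labels[w Hw ->] /=; rewrite Hall.
Qed.

Lemma right_maximal_bound : 3 <= n -> exists C, [/\ size C <= 2 * n - 3,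
  [::] \in C & forall Y, right_maximal Y -> Y \in C].
Proof.
move=> Hn; have [C [HC HCY]] :
    exists C, size C <= 2 * n - 3 /\ forall Y, ctrie_node rootstrs Y -> Y \in C.
  have [[v1 [v2 [H1 H2 H12]]]|Hno] :=
    classic (exists v1 v2, [/\ v1 != r, v2 != r & lab v1 != lab v2]).
  - exact: ctrie_bound_branching H1 H2 H12.
  - exact: ctrie_bound_unary.
exists C; split=> //; last by move=> Y /right_maximal_ctrie; apply: HCY.
by apply: HCY; left; rewrite -rootstr_root rootstr_in.
Qed.

End RootStrings.

(* A CDAWG edge (M, a beta, M') is determined by the right-maximal word
   M a beta: M is its longest right-maximal proper prefix, and M' = mx_b(M a)
   is unique. *)
Section Edges.
Variables (Sigma : finType) (n : nat) (par : 'I_n -> 'I_n)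
          (lab : 'I_n -> Sigma) (r : 'I_n).

Local Notation right_maximal := (right_maximal par lab r).
Local Notation cdawg_node := (cdawg_node par lab r).
Local Notation cdawg_edge := (cdawg_edge par lab r).

Definition edge_word (e : seq Sigma * seq Sigma * seq Sigma) : seq Sigma :=
  e.1.1 ++ e.1.2.

Lemma cdawg_node_right_maximal M : cdawg_node M -> right_maximal M.
Proof. by case=> Y [_ [[_ HR] _ _]]. Qed.

Lemma edge_word_right_maximal e : cdawg_edge e ->
  right_maximal (edge_word e) /\ edge_word e != [::].
Proof.
case: e => [[M lbl] M'] [a [beta [-> _ _ [HR _ _] _]]].
by rewrite /edge_word /= -cat_rcons; split=> //; case: (M).
Qed.

Lemma edge_source_longest M1 a1 b1 M2 a2 b2 :
  shortest_rmax_ext par lab r (rcons M1 a1) (rcons M1 a1 ++ b1) ->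
  right_maximal M2 -> M1 ++ a1 :: b1 = M2 ++ a2 :: b2 -> ~ size M1 < size M2.
Proof.
case=> _ _ Hmin HM2 E Hs.
have P1 : prefix (rcons M1 a1) (M1 ++ a1 :: b1) by rewrite -cat_rcons prefix_prefix.
have P2 : prefix M2 (M1 ++ a1 :: b1) by rewrite E prefix_prefix.
have P : prefix (rcons M1 a1) M2 by apply: prefix_shorter P1 P2 _; rewrite size_rcons.
by have := Hmin _ HM2 P; rewrite cat_rcons E size_cat /= addnS ltnNge leq_addr.
Qed.

Lemma edge_word_inj e1 e2 : cdawg_edge e1 -> cdawg_edge e2 ->
  edge_word e1 = edge_word e2 -> e1 = e2.
Proof.
case: e1 => [[M1 l1] N1] [a1 [b1 [-> /cdawg_node_right_maximal R1 _ S1 X1]]].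
case: e2 => [[M2 l2] N2] [a2 [b2 [-> /cdawg_node_right_maximal R2 _ S2 X2]]].
rewrite /edge_word /= => E.
have Hs : size M1 = size M2.
  case: (ltngtP (size M1) (size M2)) => // Hs.
  - by case: (edge_source_longest S1 R2 E Hs).
  - by case: (edge_source_longest S2 R1 (esym E) Hs).
have EM : M1 = M2.
  by have := congr1 (take (size M1)) E; rewrite take_size_cat // take_size_cat.
subst M2; have [Ea Eb] : a1 = a2 /\ b1 = b2.
  by have := congr1 (drop (size M1)) E; rewrite !drop_size_cat // => -[].
by subst a2 b2; rewrite (is_mx_unique X1 X2).
Qed.

End Edges.

Theorem theorem8 (Sigma : finType) (n : nat) (par : 'I_n -> 'I_n)
    (lab : 'I_n -> Sigma) (r : 'I_n) :
  3 <= n -> is_trie par lab r ->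
  (exists s : seq (seq Sigma),
      size s <= 2 * n - 3 /\ forall M, cdawg_node par lab r M -> M \in s) /\
  (exists s : seq (seq Sigma * seq Sigma * seq Sigma),
      size s <= 2 * n - 4 /\ forall e, cdawg_edge par lab r e -> e \in s).
Proof.
move=> Hn [_ reach_root _].
have [C [HC C_nil C_rmax]] := right_maximal_bound lab reach_root Hn.
split.
  exists C; split=> // M /cdawg_node_right_maximal; exact: C_rmax.
pose C' := [seq Y <- C | Y != [::]].
have HC' : size C' <= 2 * n - 4.
  have : size C' < size C.
    rewrite size_filter -(count_predC (fun Y : seq Sigma => Y != [::]) C) -addn1.
    by rewrite leq_add2l -has_count; apply/hasP; exists [::].
  by move: HC; lia.
have word_in e : cdawg_edge par lab r e -> edge_word e \in C'.
  by move=> /edge_word_right_maximal[HR Hne]; rewrite mem_filter Hne C_rmax.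
have [s [Hs Hcover]] :=
  list_by_injection ([::], [::], [::]) (@edge_word_inj _ _ par lab r) word_in.
by exists s; split=> //; apply: leq_trans Hs HC'.
Qed.
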